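(* (Bounded suboptimality of MPLP.) Let $G=(\mathcal{V},\mathcal{E})$ be a directed graph with start $s_0$, goal region $\mathcal{G}$, true edge costs $c^t$ and lazy edge costs $c^l\le c^t$, and let $c^*$ be the cost of an optimal path from $s_0$ to $\mathcal{G}$ in $G$ with respect to $c^t$. Then MPLP, run with heuristic inflation factor $\epsilon^h\ge1$, terminates with a path $\pi$ such that $\mathrm{cost}(\pi)\le \epsilon^h\cdot c^*$.
   Context: Each edge $e=\{s,a\}$ of $G$ (a deterministic action $a$ applied at state $s$) has a true cost $c^t(e)\in[0,\infty]$ computed by an expensive evaluation routine and a cheap lazy cost $c^l(e)\le c^t(e)$; a path's cost is the sum of its edge costs and a path is feasible if all its edges have finite true cost. MPLP (Massively Parallel Lazy Planning): a search process repeatedly runs weighted A* (ComputePath) with an admissible heuristic inflated by $\epsilon^h$ on the current intermediate graph, in which evaluated edges carry their true costs and unevaluated edges their lazy costs; newly discovered edges are put in a queue $E^{open}$ and are evaluated asynchronously in parallel by a pool of threads, which update the graph with the true costs. When a search reaches the goal, its goal $g$-value is stored as $goal\_g$ and the backtracked path is recorded; a monitoring process waits for the edges of recorded paths to be evaluated and MPLP returns a recorded path $\pi$ as the solution only if $\pi$ is feasible and its true cost satisfies $c^t(\pi)\le goal\_g$ (the $g$-value of the goal from the most recent search). *)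

From HB Require Import structures.
From mathcomp Require Import all_boot all_order all_algebra.
From mathcomp Require Import constructive_ereal.
Set Implicit Arguments. Unset Strict Implicit. Unset Printing Implicit Defensive.
Import Order.TTheory GRing.Theory Num.Theory.
Local Open Scope ring_scope.
Local Open Scope ereal_scope.

(* The graph: finite state set V, finite action set A, deterministic
   successor function succ.  An edge is a pair (s, a) : V * A.
   Edge costs are extended reals (value +oo = infeasible edge). *)
Section MPLP.
Variables (R : realFieldType) (V A : finType) (succ : V -> A -> V).

Definition edge := (V * A)%type.

Fixpoint is_walk (s : V) (p : seq edge) : bool :=
  match p with
  | [::] => true
  | e :: p' => (e.1 == s) && is_walk (succ e.1 e.2) p'
  end.

Fixpoint walk_end (s : V) (p : seq edge) : V :=
  match p with
  | [::] => s
  | e :: p' => walk_end (succ e.1 e.2) p'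
  end.

Definition goal_path (Goal : {set V}) (s : V) (p : seq edge) : bool :=
  is_walk s p && (walk_end s p \in Goal).

Definition pcost (c : V -> A -> \bar R) (p : seq edge) : \bar R :=
  \sum_(e <- p) c e.1 e.2.

Definition feasible (ct : V -> A -> \bar R) (p : seq edge) : bool :=
  all (fun e => ct e.1 e.2 < +oo) p.

Definition admissible (ct : V -> A -> \bar R) (Goal : {set V}) (h : V -> R) :=
  forall s p, goal_path Goal s p -> (h s)%:E <= pcost ct p.

Definition icost (ct cl : V -> A -> \bar R) (Ev : {set edge}) (s : V) (a : A)
  : \bar R := if (s, a) \in Ev then ct s a else cl s a.

Inductive astate :=
  | Run of {ffun V -> \bar R} & {ffun V -> option edge} & {set V}
  | Fin of option (\bar R * seq edge).

Fixpoint backtrack (n : nat) (par : {ffun V -> option edge}) (s : V)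
  : seq edge :=
  match n with
  | 0 => [::]
  | n'.+1 => match par s with
             | None => [::]
             | Some e => rcons (backtrack n' par e.1) e
             end
  end.

Section Astar.
Variables (c : V -> A -> \bar R) (Goal : {set V}) (s0 : V)
          (eps : R) (h : V -> R).

Definition fval (g : {ffun V -> \bar R}) (s : V) : \bar R :=
  g s + (eps * h s)%:E.

Definition relax (s : V) (gs : \bar R)
    (st : {ffun V -> \bar R} * {ffun V -> option edge} * {set V}) (a : A) :=
  let: (g, par, op) := st in
  let s' := succ s a in
  let ng := gs + c s a in
  if ng < g s' then
    ([ffun x => if x == s' then ng else g x],
     [ffun x => if x == s' then Some (s, a) else par x],
     s' |: op)
  else (g, par, op).

Definition astep (st : astate) : astate :=
  match st with
  | Fin r => Fin r
  | Run g par op =>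
    match [pick s in op | [forall t in op, fval g s <= fval g t]] with
    | None => Fin None
    | Some s =>
      if s \in Goal then Fin (Some (g s, backtrack #|V| par s))
      else
        let: (g', par', op') :=
          foldl (relax s (g s)) (g, par, op :\ s) (enum A) in
        Run g' par' op'
    end
  end.

Definition ainit : astate :=
  Run [ffun x => if x == s0 then 0 else +oo] [ffun _ => None] [set s0].

Definition compute_path (r : option (\bar R * seq edge)) : Prop :=
  exists n, iter n astep ainit = Fin r.

End Astar.

(* ---------- MPLP ----------
   Ev k is the set of edges whose evaluation (by the asynchronous
   evaluation threads) has completed by the time of the k-th search;
   search k runs ComputePath on the intermediate graph icost (Ev k). *)
Definition search (ct cl : V -> A -> \bar R) (Goal : {set V}) (s0 : V)
    (eps : R) (h : V -> R) (Ev : nat -> {set edge}) (k : nat) r :=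
  compute_path (icost ct cl (Ev k)) Goal s0 eps h r.

Definition mplp_returns ct cl Goal s0 eps h Ev (k : nat) (p : seq edge) :=
  (forall i, (i <= k)%N -> exists r, search ct cl Goal s0 eps h Ev i r) /\
  (exists j gj, (j <= k)%N /\ search ct cl Goal s0 eps h Ev j (Some (gj, p))) /\
  (exists goal_g pk, search ct cl Goal s0 eps h Ev k (Some (goal_g, pk)) /\
     all (fun e => e \in Ev k) p /\ feasible ct p /\ pcost ct p <= goal_g).

End MPLP.

From HB Require Import structures.
From mathcomp Require Import all_boot all_order all_algebra.
From mathcomp Require Import constructive_ereal.
From Stdlib Require Import Classical.
Set Implicit Arguments. Unset Strict Implicit. Unset Printing Implicit Defensive.
Import Order.TTheory GRing.Theory Num.Theory.
Local Open Scope ring_scope.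
Local Open Scope ereal_scope.

(* Each search of MPLP is weighted A* (with re-opening) on a graph whose edge
   costs lie between 0 and the true costs.  An invariant of the A* state shows
   that (i) every finite g-value is the cost of an edge sequence shorter than
   #|V|, so g-values range over a finite set and the search terminates;
   (ii) the parent pointers are acyclic, so backtracking from a state returns a
   path from s0 of cost at most its g-value; (iii) every finite-cost path to
   the goal region passes through an OPEN state y with g(y) at most the cost
   of the prefix.  By (iii) and admissibility, the state popped with least
   f = g + eps h has g <= eps c*.  The sets of evaluated edges form an
   increasing chain in a finite type, hence stabilise; once every edge of the
   recorded path is evaluated, its true cost is its cost in the searched graph,
   which is at most goal_g <= eps c*. *)

Section Walks.
Variables (R : realFieldType) (V A : finType) (succ : V -> A -> V).
Implicit Types (c : V -> A -> \bar R) (p q : seq (V * A)).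

Lemma pcost_nil c : pcost c [::] = 0.
Proof. exact: big_nil. Qed.

Lemma pcost_cons c e p : pcost c (e :: p) = c e.1 e.2 + pcost c p.
Proof. exact: big_cons. Qed.

Lemma pcost_cat c p q : pcost c (p ++ q) = pcost c p + pcost c q.
Proof. exact: big_cat. Qed.

Lemma pcost_rcons c p e : pcost c (rcons p e) = pcost c p + c e.1 e.2.
Proof. by rewrite -cats1 pcost_cat /pcost big_seq1. Qed.

Lemma pcost_ge0 c p : (forall s a, 0 <= c s a) -> 0 <= pcost c p.
Proof. by move=> c_ge0; apply: sume_ge0. Qed.

Lemma le_pcost c c' p : (forall s a, c s a <= c' s a) -> pcost c p <= pcost c' p.
Proof. by move=> le_cc'; apply: lee_sum. Qed.

Lemma feasibleE c p : (forall s a, 0 <= c s a) -> feasible c p = (pcost c p < +oo).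
Proof.
move=> c_ge0; elim: p => [|e p IHp] /=; first by rewrite pcost_nil ltry.
rewrite pcost_cons IHp !ltey adde_Neq_pinfty //.
  by rewrite gt_eqF // (lt_le_trans _ (c_ge0 _ _)) ?ltNy0.
by rewrite gt_eqF // (lt_le_trans _ (pcost_ge0 _ c_ge0)) ?ltNy0.
Qed.

Lemma is_walk_rcons s p e :
  is_walk succ s (rcons p e) = is_walk succ s p && (e.1 == walk_end succ s p).
Proof. by elim: p s => [|e' p IHp] s /=; rewrite ?andbT // IHp andbA. Qed.

Lemma walk_end_rcons s p e : walk_end succ s (rcons p e) = succ e.1 e.2.
Proof. by elim: p s => [|e' p IHp] s /=. Qed.

End Walks.

Lemma sub_count_lt (T : eqType) (a b : pred T) s x :
  x \in s -> subpred a b -> b x && ~~ a x -> (count a s < count b s)%N.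
Proof.
elim: s => // y s IHs; rewrite inE => /predU1P[<- | x_s] le_ab /andP[bx nax] /=.
  by rewrite bx (negbTE nax) add0n add1n ltnS sub_count.
rewrite -addnS leq_add ?IHs ?bx //.
by case: (a y) (le_ab y) => // ->.
Qed.

Lemma ltn_radix2 m1 m2 k1 k2 n :
  (m1 < m2 -> k1 <= n -> m1 * n.+1 + k1 < m2 * n.+1 + k2)%N.
Proof.
move=> lt_m le_kn; apply: (@leq_trans (m1.+1 * n.+1)); last first.
  by apply: leq_trans (leq_addr _ _); rewrite leq_mul2r lt_m orbT.
by rewrite mulSn addnC ltn_add2r ltnS.
Qed.

Section WeightedAstar.
Variables (R : realFieldType) (V A : finType) (succ : V -> A -> V).
Variables (c : V -> A -> \bar R) (Goal : {set V}) (s0 : V) (eps : R) (h : V -> R).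
Hypothesis c_ge0 : forall s a, 0 <= c s a.

Local Arguments relax : simpl never.

Local Notation gmap := {ffun V -> \bar R}.
Local Notation pmap := {ffun V -> option (V * A)}.

Variant relax_spec (s : V) (gs : \bar R) (g : gmap) (par : pmap) (op : {set V})
    (g' : gmap) (par' : pmap) (op' : {set V}) (x : V) : Prop :=
  | RelaxKeep of g' x = g x & par' x = par x & (x \in op') = (x \in op)
  | RelaxImprove a of succ s a = x & g' x = gs + c s a & g' x < g x
      & par' x = Some (s, a) & x \in op'.
Arguments RelaxImprove {s gs g par op g' par' op' x} a.

Lemma relax_spec_le s gs g par op g' par' op' x :
  relax_spec s gs g par op g' par' op' x -> g' x <= g x.
Proof. by case=> [-> _ _ | a _ _ /ltW]. Qed.

Lemma relax_spec_trans s gs g par op g1 par1 op1 g' par' op' x :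
  relax_spec s gs g par op g1 par1 op1 x ->
  relax_spec s gs g1 par1 op1 g' par' op' x ->
  relax_spec s gs g par op g' par' op' x.
Proof.
case=> [E1 P1 O1 | a Ea E1 L1 P1 O1] [E2 P2 O2 | b Eb E2 L2 P2 O2].
- by apply: RelaxKeep; rewrite ?E2 ?P2 ?O2.
- by apply: (RelaxImprove b) => //; rewrite -E1.
- by apply: (RelaxImprove a); rewrite ?E2 ?P2 ?O2.
- by apply: (RelaxImprove b) => //; apply: lt_trans L2 L1.
Qed.

Lemma relaxP s gs g par op a :
  let: (g', par', op') := relax succ c s gs (g, par, op) a in
  (forall x, relax_spec s gs g par op g' par' op' x) /\ g' (succ s a) <= gs + c s a.
Proof.
rewrite /relax; case: ifP => [lt_g | /negbT]; last first.
  by rewrite -leNgt; split=> // x; apply: RelaxKeep.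
split=> [x|]; last by rewrite ffunE eqxx.
have [-> | ne] := eqVneq x (succ s a).
  by apply: (RelaxImprove a); rewrite ?ffunE ?setU11 ?eqxx.
by apply: RelaxKeep; rewrite ?ffunE ?in_setU1 (negbTE ne).
Qed.

Lemma relax_foldP s gs l g par op :
  let: (g', par', op') := foldl (relax succ c s gs) (g, par, op) l in
  (forall x, relax_spec s gs g par op g' par' op' x) /\
  (forall a, a \in l -> g' (succ s a) <= gs + c s a).
Proof.
elim: l g par op => [|a l IHl] g par op; first by split=> // x; apply: RelaxKeep.
have := relaxP s gs g par op a; rewrite /=.
case: (relax succ c s gs (g, par, op) a) => [[g1 par1] op1] [spec1 le1].
have := IHl g1 par1 op1; case: (foldl _ _ _) => [[g' par'] op'] [spec' le'].
split=> [x | b]; first exact: relax_spec_trans (spec1 x) (spec' x).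
rewrite inE => /predU1P[-> | /le'//].
exact: le_trans (relax_spec_le (spec' _)) le1.
Qed.

Definition key_lt (g : V -> \bar R) (t : V -> nat) (y x : V) : bool :=
  (g y < g x) || ((g y == g x) && (t y < t x)%N).

Lemma key_lt_irr g t x : key_lt g t x x = false.
Proof. by rewrite /key_lt ltxx ltnn andbF. Qed.

Lemma key_lt_trans g t x y z : key_lt g t y x -> key_lt g t z y -> key_lt g t z x.
Proof.
rewrite /key_lt => /orP[lt_yx | /andP[/eqP-> lt_yx]] /orP[lt_zy | /andP[/eqP-> lt_zy]].
- by rewrite (lt_trans lt_zy lt_yx).
- by rewrite lt_yx.
- by rewrite lt_zy.
- by rewrite eqxx (ltn_trans lt_zy lt_yx) orbT.
Qed.

(* The timestamps [t] break ties along zero-cost edges, so that the parent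
   pointers are acyclic; the size bound in [ainv_witness] confines the finite
   g-values to [short_costs] below. *)
Record astar_inv (g : gmap) (par : pmap) (op : {set V}) : Prop := {
  ainv_ge0 : forall x, 0 <= g x;
  ainv_start : g s0 = 0;
  ainv_open : forall x, x \in op -> g x < +oo;
  ainv_closed : forall x, x \notin op -> forall a, g (succ x a) <= g x + c x a;
  ainv_goal : forall x, x \in Goal -> x \notin op -> g x = +oo;
  ainv_parent : exists t, forall x e, par x = Some e ->
    [/\ succ e.1 e.2 = x, g e.1 + c e.1 e.2 <= g x & key_lt g t e.1 x];
  ainv_root : forall x, par x = None -> x = s0 \/ g x = +oo;
  ainv_witness : forall x, g x < +oo ->
    exists2 q, pcost c q = g x & (size q < #|[set y | (g y <= g x)%E]|)%N }.

Lemma ainit_inv :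
  astar_inv [ffun x => if x == s0 then 0 else +oo] [ffun=> None] [set s0].
Proof.
split=> [x | | x | x | x _ | | x _ | x] //; rewrite ?ffunE ?eqxx ?in_set1 //.
- by case: ifP; rewrite ?leey.
- by move=> /eqP->; rewrite eqxx ltry.
- move=> /negbTE-> a; rewrite addye ?leey //.
  by rewrite gt_eqF // (lt_le_trans _ (c_ge0 _ _)) ?ltNy0.
- by move=> /negbTE->.
- by exists (fun=> 0%N) => x e; rewrite ffunE.
- by case: eqVneq; [left | right].
case: eqVneq => // _ _; exists [::]; first exact: pcost_nil.
by apply/card_gt0P; exists s0; rewrite inE ffunE eqxx.
Qed.

Definition short_costs : seq (\bar R) :=
  flatten [seq [seq pcost c t | t : n.-tuple (V * A)] | n <- iota 0 #|V|].

Lemma short_costsP q : (size q < #|V|)%N -> pcost c q \in short_costs.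
Proof.
move=> short_q; apply/flattenP; exists [seq pcost c t | t : (size q).-tuple (V * A)].
  by apply: (map_f (fun n => [seq pcost c t | t : n.-tuple _])); rewrite mem_iota.
by apply/mapP; exists (in_tuple q); rewrite ?mem_enum.
Qed.

Lemma astar_inv_short_cost g par op x :
  astar_inv g par op -> g x < +oo -> g x \in short_costs.
Proof.
move=> inv /(ainv_witness inv)[q <- size_q]; apply: short_costsP.
exact: leq_trans size_q (max_card _).
Qed.

Definition cost_rank (v : \bar R) : nat := count (fun w => w < v) short_costs.

Lemma cost_rank_le v w : v <= w -> (cost_rank v <= cost_rank w)%N.
Proof. by move=> le_vw; apply: sub_count => u /= /lt_le_trans; apply. Qed.

Lemma cost_rank_lt v w : v \in short_costs -> v < w -> (cost_rank v < cost_rank w)%N.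
Proof.
move=> v_short lt_vw; apply: (sub_count_lt v_short) => [u /= /lt_trans|]; first exact.
by rewrite lt_vw ltxx.
Qed.

(* Lexicographic in (ranks of the g-values, size of OPEN): an expansion either
   lowers some g-value or only removes the expanded state from OPEN. *)
Definition potential (g : gmap) (op : {set V}) : nat :=
  ((\sum_x cost_rank (g x)) * #|V|.+1 + #|op|)%N.

Section Expansion.
Variables (g : gmap) (par : pmap) (op : {set V}) (s : V).
Hypotheses (inv : astar_inv g par op) (s_open : s \in op) (s_goal : s \notin Goal).
Variables (g' : gmap) (par' : pmap) (op' : {set V}).
Hypothesis relaxed : forall x, relax_spec s (g s) g par (op :\ s) g' par' op' x.
Hypothesis relaxed_succ : forall a, g' (succ s a) <= g s + c s a.

Lemma expand_le x : g' x <= g x.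
Proof. exact: relax_spec_le (relaxed x). Qed.

Lemma expand_source : g' s = g s.
Proof.
case: (relaxed s) => [-> // | a _ -> lt_s _ _].
by move: lt_s; rewrite ltNge leeDl.
Qed.

Lemma expand_parent : exists t, forall x e, par' x = Some e ->
  [/\ succ e.1 e.2 = x, g' e.1 + c e.1 e.2 <= g' x & key_lt g' t e.1 x].
Proof.
have [t par_ok] := ainv_parent inv.
exists (fun x => if g' x == g x then t x else (\max_y t y).+1) => x e.
case: (relaxed x) =>
    [g_x -> _ /par_ok[succ_e le_e key_e] | a succ_a g_x lt_x -> _ [<-]].
  split=> //; first by rewrite g_x (le_trans _ le_e) ?leeD2r ?expand_le.
  rewrite /key_lt g_x eqxx.
  case: (relaxed e.1) => [-> _ _ | b _ _ lt_e _ _]; first by rewrite eqxx.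
  apply/orP; left; apply: lt_le_trans lt_e _.
  by case/orP: key_e => [/ltW // | /andP[/eqP-> _]].
split=> //=; first by rewrite expand_source g_x.
rewrite /key_lt expand_source eqxx (lt_eqF lt_x) g_x ltnS leq_bigmax andbT.
by rewrite orbC -le_eqVlt leeDl.
Qed.

Lemma expand_witness x : g' x < +oo ->
  exists2 q, pcost c q = g' x & (size q < #|[set y | (g' y <= g' x)%E]|)%N.
Proof.
have sub_sub v v' : v <= v' -> [set y | (g y <= v)%E] \subset [set y | (g' y <= v')%E].
  move=> le_v; apply/subsetP => y; rewrite !inE.
  by move=> /(le_trans (expand_le y))/le_trans; apply.
case: (relaxed x) => [g_x _ _ | a _ g_x lt_x _ _] fin_x.
  rewrite g_x in fin_x *; have [q cost_q size_q] := ainv_witness inv fin_x.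
  by exists q => //; apply: leq_trans size_q _; apply/subset_leq_card/sub_sub.
have [q cost_q size_q] := ainv_witness inv (ainv_open inv s_open).
exists (rcons q (s, a)); first by rewrite pcost_rcons cost_q g_x.
rewrite size_rcons; apply: leq_ltn_trans size_q _; apply: proper_card.
rewrite properE sub_sub ?g_x ?leeDl //=; apply/subsetPn; exists x; rewrite !inE ?g_x //.
by rewrite -ltNge (le_lt_trans _ lt_x) // g_x leeDl.
Qed.

Lemma expand_inv : astar_inv g' par' op'.
Proof.
have ge0' x : 0 <= g' x.
  by case: (relaxed x) => [-> _ _ | a _ -> _ _ _]; rewrite ?adde_ge0 ?(ainv_ge0 inv).
split=> // [| x | x | x goal_x | | x | ].
- by apply/le_anti; rewrite ge0' -(ainv_start inv) expand_le.
- case: (relaxed x) => [-> _ -> | a _ _ lt_x _ _ _].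
    by rewrite in_setD1 => /andP[_ /(ainv_open inv)].
  exact: lt_le_trans lt_x (leey _).
- case: (relaxed x) => [g_x _ -> | a _ _ _ _ ->] //.
  rewrite in_setD1 negb_and negbK => /orP[/eqP-> a | x_closed a].
    by rewrite expand_source relaxed_succ.
  by rewrite g_x; apply: le_trans (expand_le _) (ainv_closed inv x_closed a).
- case: (relaxed x) => [-> _ -> | a _ _ _ _ ->] //.
  rewrite in_setD1 negb_and negbK => /orP[/eqP x_s | /(ainv_goal inv goal_x) //].
  by move: s_goal; rewrite -x_s goal_x.
- exact: expand_parent.
- by case: (relaxed x) => [-> -> _ /(ainv_root inv) | a _ _ _ ->].
- exact: expand_witness.
Qed.

Lemma expand_potential : (potential g' op' < potential g op)%N.
Proof.
have le_rank x : (cost_rank (g' x) <= cost_rank (g x))%N.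
  exact/cost_rank_le/expand_le.
have le_sum : (\sum_x cost_rank (g' x) <= \sum_x cost_rank (g x))%N.
  by apply: leq_sum.
have [/existsP[x lt_x] | /existsPn unchanged] := boolP [exists x, g' x < g x].
  apply: ltn_radix2 (max_card _).
  rewrite (bigD1 x) //= [X in (_ < X)%N](bigD1 x) //= -addSn leq_add ?leq_sum //.
  apply: (cost_rank_lt _ lt_x); apply: (astar_inv_short_cost expand_inv).
  exact: lt_le_trans lt_x (leey _).
have -> : op' = op :\ s.
  apply/setP => x; case: (relaxed x) => [_ _ -> // | a _ _ lt_x _ _].
  by move: (unchanged x); rewrite lt_x.
by rewrite /potential -addnS leq_add ?leq_mul2r ?le_sum ?orbT // (cardsD1 s op) s_open.
Qed.

End Expansion.

Local Notation astar_step := (astep succ c Goal eps h).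

Lemma astep_runP g par op : astar_inv g par op ->
  (exists r, astar_step (Run g par op) = Fin r) \/
  exists g' par' op', [/\ astar_step (Run g par op) = Run g' par' op',
    astar_inv g' par' op' & (potential g' op' < potential g op)%N].
Proof.
move=> inv; rewrite /astep; case: pickP => [s /andP[s_open _] | _]; last first.
  by left; exists None.
case: ifP => [_ | /negbT s_goal]; first by left; eexists.
have := relax_foldP s (g s) (enum A) g par (op :\ s).
case: (foldl _ _ _) => [[g' par'] op'] [relaxed relaxed_enum]; right.
have relaxed_succ a : g' (succ s a) <= g s + c s a by rewrite relaxed_enum ?mem_enum.
exists g', par', op'; split=> //.
  exact: (expand_inv inv s_open s_goal relaxed relaxed_succ).
exact: (expand_potential inv s_open s_goal relaxed relaxed_succ).
Qed.

Lemma astar_terminates g par op : astar_inv g par op ->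
  exists n r, iter n astar_step (Run g par op) = Fin r.
Proof.
have [m] := ubnP (potential g op); elim: m g par op => // m IHm g par op lt_pm inv.
case: (astep_runP inv) => [[r E] | [g' [par' [op' [E inv' lt_p]]]]].
  by exists 1%N, r.
have [n [r Er]] := IHm g' par' op' (leq_trans lt_p lt_pm) inv'.
by exists n.+1, r; rewrite iterSr E.
Qed.

Lemma compute_path_terminates : exists r, compute_path succ c Goal s0 eps h r.
Proof. by have [n [r E]] := astar_terminates ainit_inv; exists r, n. Qed.

Lemma goal_walk_meets_open g par op : astar_inv g par op ->
  forall q x, is_walk succ x q -> walk_end succ x q \in Goal -> g x + pcost c q < +oo ->
  exists q1 q2 y, [/\ q = q1 ++ q2, y \in op, goal_path succ Goal y q2
    & g y <= g x + pcost c q1].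
Proof.
move=> inv; elim=> [|e q IHq] x walk_q goal_q fin_q.
all: have [x_open | x_closed] := boolP (x \in op).
- by exists [::], [::], x; rewrite pcost_nil adde0 /goal_path.
- by move: fin_q; rewrite pcost_nil adde0 (ainv_goal inv goal_q x_closed).
- by exists [::], (e :: q), x; rewrite pcost_nil adde0 /goal_path walk_q goal_q.
case/andP: walk_q => /eqP e_x walk_q.
have le_succ : g (succ e.1 e.2) <= g x + c e.1 e.2.
  by rewrite e_x; apply: (ainv_closed inv x_closed).
have fin_succ : g (succ e.1 e.2) + pcost c q < +oo.
  by apply: le_lt_trans fin_q; rewrite pcost_cons addeA leeD2r.
have [q1 [q2 [y [-> y_open goal_y le_y]]]] := IHq _ walk_q goal_q fin_succ.
exists (e :: q1), q2, y; split=> //.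
by rewrite pcost_cons addeA; apply: le_trans le_y (leeD2r _ le_succ).
Qed.

Lemma backtrack_walk g par op x : astar_inv g par op -> g x < +oo ->
  let p := backtrack #|V| par x in
  [/\ is_walk succ s0 p, walk_end succ s0 p = x & pcost c p <= g x].
Proof.
move=> inv; have [t par_ok] := ainv_parent inv.
pose below y := [set z | key_lt g t z y].
suff bt n y : (#|below y| < n)%N -> g y < +oo ->
    let p := backtrack n par y in
    [/\ is_walk succ s0 p, walk_end succ s0 p = y & pcost c p <= g y].
  apply: bt; rewrite -cardsT; apply: proper_card; apply/properP; split=> //.
  by exists x; rewrite ?inE ?key_lt_irr.
elim: n y => // n IHn y lt_below fin_y /=.
case par_y: (par y) => [e|]; last first.
  case: (ainv_root inv par_y) => [-> | inf_y]; last by rewrite inf_y ltxx in fin_y.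
  by rewrite pcost_nil (ainv_ge0 inv).
have [succ_e le_e key_e] := par_ok y e par_y.
have fin_e : g e.1 < +oo.
  by apply: le_lt_trans fin_y; apply: le_trans le_e; apply: leeDl.
have lt_below_e : (#|below e.1| < n)%N.
  rewrite -ltnS; apply: leq_trans lt_below; apply: proper_card; apply/properP; split.
    by apply/subsetP => z; rewrite !inE; apply: key_lt_trans key_e.
  by exists e.1; rewrite !inE ?key_e ?key_lt_irr.
have [walk_e end_e cost_e] := IHn _ lt_below_e fin_e.
rewrite is_walk_rcons walk_end_rcons pcost_rcons walk_e end_e eqxx succ_e.
by split=> //; apply: le_trans le_e; apply: leeD2r.
Qed.

Variable ct : V -> A -> \bar R.
Hypotheses (c_le_ct : forall s a, c s a <= ct s a) (eps_ge1 : (1 <= eps)%R)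
  (h_ge0 : forall s, (0 <= h s)%R) (adm : admissible succ ct Goal h).

Lemma popped_g_le g par op s : astar_inv g par op -> s \in op ->
  (forall t, t \in op -> fval eps h g s <= fval eps h g t) ->
  forall q, goal_path succ Goal s0 q -> g s <= eps%:E * pcost ct q.
Proof.
move=> inv s_open s_min q /andP[walk_q goal_q].
have ct_ge0 s' a : 0 <= ct s' a by apply: le_trans (c_le_ct s' a).
have eps_gt0 : (0 < eps)%R by apply: lt_le_trans eps_ge1.
have [fin_q | ] := boolP (pcost c q < +oo); last first.
  rewrite -leNgt leye_eq => /eqP inf_q.
  have := le_pcost q c_le_ct; rewrite inf_q leye_eq => /eqP->.
  by rewrite gt0_muley ?lte_fin ?leey.
have fin_q0 : g s0 + pcost c q < +oo by rewrite (ainv_start inv) add0e.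
have [q1 [q2 [y [-> y_open goal_y le_y]]]] :=
  goal_walk_meets_open inv walk_q goal_q fin_q0.
rewrite (ainv_start inv) add0e in le_y.
rewrite pcost_cat ge0_muleDr ?pcost_ge0 //.
have le_fs : g s <= fval eps h g s by apply/leeDl/(mulr_ge0 (ltW eps_gt0)).
apply: le_trans le_fs (le_trans (s_min y y_open) _).
rewrite /fval EFinM; apply: leeD.
  apply: le_trans le_y (le_trans (le_pcost q1 c_le_ct) (lee_pemull _ _)) => //.
  exact: pcost_ge0.
by apply: lee_wpmul2l; [rewrite lee_fin ltW | exact: adm goal_y].
Qed.

Definition astar_result_ok (r : option (\bar R * seq (V * A))) : Prop :=
  if r is Some (gv, p) then
    [/\ goal_path succ Goal s0 p, pcost c p <= gv
      & forall q, goal_path succ Goal s0 q -> gv <= eps%:E * pcost ct q]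
  else forall q, goal_path succ Goal s0 q -> pcost c q = +oo.

Lemma astep_fin_ok g par op r :
  astar_inv g par op -> astar_step (Run g par op) = Fin r -> astar_result_ok r.
Proof.
move=> inv; rewrite /astep; case: pickP => [s /andP[s_open /forallP s_min] | no_min].
  case: ifP => [s_goal [<-] | _]; last by case: (foldl _ _ _) => [[]].
  have [walk_s end_s cost_s] := backtrack_walk inv (ainv_open inv s_open).
  split=> //; first by rewrite /goal_path walk_s end_s.
  by apply: (popped_g_le inv s_open) => t; apply/implyP/s_min.
move=> [<-] q /andP[walk_q goal_q].
apply/eqP; rewrite -leye_eq leNgt; apply/negP => fin_q.
have fin_q0 : g s0 + pcost c q < +oo by rewrite (ainv_start inv) add0e.
have [_ [_ [y [_ y_open _ _]]]] := goal_walk_meets_open inv walk_q goal_q fin_q0.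
case: (arg_minP (fval eps h g) y_open) => m m_open m_min.
move/negbT/negP: (no_min m); apply; apply/andP; split=> //.
by apply/forallP => t; apply/implyP; apply: m_min.
Qed.

Definition astar_state_ok (st : astate R V A) : Prop :=
  if st is Run g par op then astar_inv g par op else
  if st is Fin r then astar_result_ok r else False.

Lemma astep_ok st : astar_state_ok st -> astar_state_ok (astar_step st).
Proof.
case: st => [g par op | r] inv; last exact: inv.
case: (astep_runP inv) => [[r E] | [g' [par' [op' [E inv' _]]]]]; rewrite E //.
exact: astep_fin_ok inv E.
Qed.

Lemma compute_path_sound r : compute_path succ c Goal s0 eps h r -> astar_result_ok r.
Proof.
move=> [n iter_n]; have : astar_state_ok (iter n astar_step (ainit R A s0)).
  by elim: n {iter_n} => [|n IHn]; [exact: ainit_inv | exact: astep_ok].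
by rewrite iter_n.
Qed.

End WeightedAstar.

Lemma subset_chain_stable (T : finType) (E : nat -> {set T}) :
  (forall k, E k \subset E k.+1) -> exists K, forall k, E k \subset E K.
Proof.
move=> E_S; have E_mono : {homo E : i j / (i <= j)%N >-> i \subset j}.
  by apply: homo_leq E_S => [B | B C D]; [exact: subxx | exact: subset_trans].
have [n] := ubnP (#|T| - #|E 0%N|); elim: n 0%N => // n IHn m gap.
have [[k not_sub] | stable] := classic (exists k, ~~ (E k \subset E m)); last first.
  by exists m => k; apply/negPn/negP => not_sub; apply: stable; exists k.
have lt_mk : (m < k)%N by rewrite ltnNge; apply: contra not_sub => /E_mono.
have lt_card : (#|E m| < #|E k|)%N.
  by apply: proper_card; rewrite properE E_mono ?(ltnW lt_mk).
apply: (IHn k); apply: leq_trans (ltn_sub2l _ lt_card) gap.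
exact: leq_trans lt_card (max_card _).
Qed.

Section MPLP.
Variables (R : realFieldType) (V A : finType) (succ : V -> A -> V).
Variables (s0 : V) (Goal : {set V}) (ct cl : V -> A -> \bar R).
Variables (eps : R) (h : V -> R) (Ev : nat -> {set (V * A)}).
Hypotheses (cost_bounds : forall s a, 0 <= cl s a /\ cl s a <= ct s a)
  (eps_ge1 : (1 <= eps)%R) (h_ge0 : forall s, (0 <= h s)%R)
  (adm : admissible succ ct Goal h).

Lemma icost_ge0 E s a : 0 <= icost ct cl E s a.
Proof.
have [cl_ge0 cl_le] := cost_bounds s a.
by rewrite /icost; case: ifP => // _; apply: le_trans cl_le.
Qed.

Lemma icost_le E s a : icost ct cl E s a <= ct s a.
Proof. by rewrite /icost; case: ifP => // _; case: (cost_bounds s a). Qed.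

Lemma pcost_icost (E : {set (V * A)}) p :
  all (fun e => e \in E) p -> pcost (icost ct cl E) p = pcost ct p.
Proof. by move=> /allP p_E; apply: eq_big_seq => -[s a] /p_E; rewrite /icost => ->. Qed.

Local Notation search := (search succ ct cl Goal s0 eps h Ev).
Local Notation mplp_returns := (mplp_returns succ ct cl Goal s0 eps h Ev).

Lemma search_sound k r :
  search k r -> astar_result_ok succ (icost ct cl (Ev k)) Goal s0 eps ct r.
Proof.
exact: (compute_path_sound (icost_ge0 (Ev k)) (icost_le (Ev k)) eps_ge1 h_ge0 adm).
Qed.

Lemma search_terminates k : exists r, search k r.
Proof.
by have [r] := compute_path_terminates succ Goal s0 eps h (icost_ge0 (Ev k)); exists r.
Qed.

Lemma mplp_returns_le k p : mplp_returns k p ->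
  forall q, goal_path succ Goal s0 q -> pcost ct p <= eps%:E * pcost ct q.
Proof.
move=> [_ [_ [gk [pk [/search_sound[_ _ gk_le] [_ [_ le_p]]]]]]] q /gk_le.
exact: le_trans le_p.
Qed.

Lemma mplp_returns_exists :
  (exists q, goal_path succ Goal s0 q && feasible ct q) ->
  (forall k, Ev k \subset Ev k.+1) ->
  (forall k g p, search k (Some (g, p)) ->
     forall e, e \in p -> exists k', e \in Ev k') ->
  exists k p, mplp_returns k p /\ goal_path succ Goal s0 p.
Proof.
move=> [q0 /andP[goal_q0 feas_q0]] Ev_mono eventually_evaluated.
have ct_ge0 s a : 0 <= ct s a by have [] := cost_bounds s a; apply: le_trans.
rewrite feasibleE // in feas_q0.
have [K Ev_K] := subset_chain_stable Ev_mono.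
have [[[gK p] | ] search_K] := search_terminates K; last first.
  have := le_lt_trans (le_pcost q0 (icost_le (Ev K))) feas_q0.
  by rewrite (search_sound search_K q0 goal_q0) ltxx.
have [goal_p le_p gK_le] := search_sound search_K.
have p_evaluated : all (fun e => e \in Ev K) p.
  apply/allP => e /(eventually_evaluated _ _ _ search_K)[k' e_k'].
  exact: subsetP (Ev_K k') _ e_k'.
have le_p' : pcost ct p <= gK by rewrite -(pcost_icost p_evaluated).
have fin_p : pcost ct p < +oo.
  apply: le_lt_trans le_p' (le_lt_trans (gK_le _ goal_q0) _).
  by rewrite lte_mul_pinfty // lee_fin (le_trans ler01 eps_ge1).
exists K, p; split=> //; split; first by move=> i _; exact: search_terminates.
split; first by exists K, gK.
by exists gK, p; rewrite feasibleE.
Qed.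

End MPLP.

Unset Implicit Arguments.

Theorem theorem2 (R : realFieldType) (V A : finType) (succ : V -> A -> V)
    (s0 : V) (Goal : {set V}) (ct cl : V -> A -> \bar R)
    (eps : R) (h : V -> R) (Ev : nat -> {set (V * A)}) :
  (forall s a, 0 <= cl s a /\ cl s a <= ct s a) ->
  (1 <= eps)%R ->
  (forall s, 0 <= h s)%R ->
  admissible succ ct Goal h ->
  (exists p, goal_path succ Goal s0 p && feasible ct p) ->
  (forall k, Ev k \subset Ev k.+1) ->
  (forall k g p, search succ ct cl Goal s0 eps h Ev k (Some (g, p)) ->
     forall e, e \in p -> exists k', e \in Ev k') ->
  (exists k p, mplp_returns succ ct cl Goal s0 eps h Ev k p /\
     goal_path succ Goal s0 p /\
     forall q, goal_path succ Goal s0 q -> pcost ct p <= eps%:E * pcost ct q)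
  /\
  (forall k p, mplp_returns succ ct cl Goal s0 eps h Ev k p ->
     forall q, goal_path succ Goal s0 q -> pcost ct p <= eps%:E * pcost ct q).
Proof.
move=> cost_bounds eps_ge1 h_ge0 adm feasible_goal Ev_mono evaluated.
have bound := mplp_returns_le (s0 := s0) (Ev := Ev) cost_bounds eps_ge1 h_ge0 adm.
split; last exact: bound.
have [k [p [ret_p goal_p]]] :=
  mplp_returns_exists cost_bounds eps_ge1 h_ge0 adm feasible_goal Ev_mono evaluated.
by exists k, p; do !split=> //; exact: bound ret_p.
Qed.
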